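(* Let $F_1,\dots,F_n:\mathbb{R}^d\to\mathbb{R}^d$ with each $F_i$ being $L_i$-Lipschitz, $F=\frac1n\sum_iF_i$, $F(x^* )=0$. Let $v\in\mathbb{R}^n_+$ be a random vector with $\mathbb{E}[v_i]=1$ and $\mathbb{E}[v_i^2]<\infty$ for all $i$, and $F_v(x)=\frac1n\sum_iv_iF_i(x)$. Then for all $x\in\mathbb{R}^d$, $$\mathbb{E}\|(F_v(x)-F_v(x^* ))-(F(x)-F(x^* ))\|^2\le\frac\delta2\|x-x^*\|^2\quad\text{with}\quad\delta=\frac2n\sum_{i=1}^nL_i^2\,\mathbb{E}(v_i^2).$$ If in addition $F$ is $\mu$-quasi strongly monotone, then the same inequality holds with $\delta=\frac2n\sum_{i=1}^nL_i^2\,\mathbb{E}(v_i^2)-2\mu^2$.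
   Context: $L_i$-Lipschitz: $\|F_i(x)-F_i(y)\|\le L_i\|x-y\|$. $\mu$-quasi strongly monotone ($\mu>0$): $\langle F(x),x-x^*\rangle\ge\mu\|x-x^*\|^2$ for all $x$. *)

From HB Require Import structures.
From mathcomp Require Import all_boot all_order all_algebra.
From mathcomp Require Import all_classical all_reals all_analysis.
Unset Printing Implicit Defensive.
Import Order.TTheory GRing.Theory Num.Theory.
Local Open Scope ring_scope.

(* R^d is modelled as row vectors 'rV[R]_d with the Euclidean inner product/norm. *)
Definition dotv {R : realType} {d : nat} (x y : 'rV[R]_d) : R :=
  \sum_(j < d) x 0 j * y 0 j.

Definition enorm {R : realType} {d : nat} (x : 'rV[R]_d) : R :=
  Num.sqrt (dotv x x).

Definition Lipschitz_with {R : realType} {d : nat} (G : 'rV[R]_d -> 'rV[R]_d) (L : R) : Prop :=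
  forall x y, enorm (G x - G y) <= L * enorm (x - y).

Definition quasi_strongly_monotone {R : realType} {d : nat}
  (G : 'rV[R]_d -> 'rV[R]_d) (mu : R) (xs : 'rV[R]_d) : Prop :=
  forall x, mu * enorm (x - xs) ^+ 2 <= dotv (G x) (x - xs).

Definition avgop {R : realType} {d n : nat} (Fs : 'I_n -> 'rV[R]_d -> 'rV[R]_d) :
  'rV[R]_d -> 'rV[R]_d := fun x => n%:R^-1 *: \sum_(i < n) Fs i x.

Definition wavgop {R : realType} {d n : nat} (Fs : 'I_n -> 'rV[R]_d -> 'rV[R]_d)
  (v : 'I_n -> R) : 'rV[R]_d -> 'rV[R]_d :=
  fun x => n%:R^-1 *: \sum_(i < n) v i *: Fs i x.

From HB Require Import structures.
From mathcomp Require Import all_boot all_order all_algebra.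
From mathcomp Require Import all_classical all_reals all_analysis.
From mathcomp Require Import ring lra measurable_realfun.
Import Order.TTheory GRing.Theory Num.Theory.
Local Open Scope ring_scope.

(* Expanding the square makes everything a polynomial of degree at most two in
   the weights v_i, so its expectation only involves E v_i = 1 and E v_i^2.
   With a_i = F_i x - F_i xs and m = F x - F xs = (1/n) sum_i a_i, Jensen's
   inequality for the average of the vectors v_i a_i gives, pointwise,
     |F_v x - F_v xs - m|^2 <= (1/n) sum_i v_i^2 |a_i|^2 - (2/n) sum_i v_i <a_i, m> + |m|^2.
   In expectation the linear terms add up to -2 |m|^2, so the expected error is
   at most (1/n) sum_i E(v_i^2) L_i^2 |x - xs|^2 - |m|^2.  Dropping |m|^2 gives
   the first bound; under quasi strong monotonicity |m| = |F x| >= mu |x - xs|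
   gives the second. *)

Section InnerProduct.
Context {R : realType} {d : nat}.
Implicit Types x y z : 'rV[R]_d.

Lemma dotvDl x y z : dotv (x + y) z = dotv x z + dotv y z.
Proof. by rewrite /dotv -big_split; apply: eq_bigr => j _; rewrite mxE mulrDl. Qed.

Lemma dotvC x y : dotv x y = dotv y x.
Proof. by rewrite /dotv; apply: eq_bigr => j _; rewrite mulrC. Qed.

Lemma dotvDr x y z : dotv z (x + y) = dotv z x + dotv z y.
Proof. by rewrite dotvC dotvDl !(dotvC z). Qed.

Lemma dotvZl a x y : dotv (a *: x) y = a * dotv x y.
Proof. by rewrite /dotv mulr_sumr; apply: eq_bigr => j _; rewrite mxE mulrA. Qed.

Lemma dotvZr a x y : dotv y (a *: x) = a * dotv y x.
Proof. by rewrite dotvC dotvZl dotvC. Qed.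

Lemma dotvNl x y : dotv (- x) y = - dotv x y.
Proof. by rewrite -scaleN1r dotvZl mulN1r. Qed.

Lemma dotvBl x y z : dotv (x - y) z = dotv x z - dotv y z.
Proof. by rewrite dotvDl dotvNl. Qed.

Lemma dotvBr x y z : dotv z (x - y) = dotv z x - dotv z y.
Proof. by rewrite dotvC dotvBl !(dotvC z). Qed.

Lemma dotv_suml I (s : seq I) (P : pred I) (f : I -> 'rV[R]_d) z :
  dotv (\sum_(i <- s | P i) f i) z = \sum_(i <- s | P i) dotv (f i) z.
Proof.
elim/big_rec2: _ => [|i y a _ <-]; last by rewrite dotvDl.
by rewrite /dotv big1 // => j _; rewrite mxE mul0r.
Qed.

Lemma dotvv_ge0 x : 0 <= dotv x x.
Proof. by apply: sumr_ge0 => j _; rewrite -expr2 sqr_ge0. Qed.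

Lemma enorm_sqr x : enorm x ^+ 2 = dotv x x.
Proof. by rewrite /enorm sqr_sqrtr // dotvv_ge0. Qed.

Lemma enorm_ge0 x : 0 <= enorm x.
Proof. exact: sqrtr_ge0. Qed.

Lemma dotv_avg_le {n} (b : 'I_n -> 'rV[R]_d) : (0 < n)%N ->
  dotv (n%:R^-1 *: \sum_i b i) (n%:R^-1 *: \sum_i b i)
    <= n%:R^-1 * \sum_i dotv (b i) (b i).
Proof.
move=> n_gt0; set m := n%:R^-1 *: \sum_i b i.
have n_pos : 0 < n%:R :> R by rewrite ltr0n.
have sum_b : \sum_i b i = n%:R *: m.
  by rewrite /m scalerA mulfV ?scale1r ?gt_eqF.
have spread_ge0 : 0 <= \sum_i dotv (b i - m) (b i - m).
  by apply: sumr_ge0 => i _; apply: dotvv_ge0.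
have spread_eq : \sum_i dotv (b i - m) (b i - m) =
    \sum_i dotv (b i) (b i) - 2 * dotv (\sum_i b i) m + n%:R * dotv m m.
  transitivity (\sum_i (dotv (b i) (b i) - 2 * dotv (b i) m + dotv m m)).
    by apply: eq_bigr => i _; rewrite !dotvBl !dotvBr (dotvC m); ring.
  rewrite !big_split /= sumrN -mulr_sumr -dotv_suml sumr_const card_ord.
  by rewrite -[dotv m m *+ n]mulr_natl.
rewrite spread_eq sum_b dotvZl in spread_ge0.
by rewrite ler_pdivlMl //; nra.
Qed.

Lemma dotv_wavg_sub_le {n} (c : 'I_n -> R) (a : 'I_n -> 'rV[R]_d) m : (0 < n)%N ->
  dotv (n%:R^-1 *: \sum_i c i *: a i - m) (n%:R^-1 *: \sum_i c i *: a i - m) <=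
    \sum_i (n%:R^-1 * dotv (a i) (a i) * c i ^+ 2 - 2 * n%:R^-1 * dotv (a i) m * c i)
    + dotv m m.
Proof.
move=> n_gt0; set u := n%:R^-1 *: \sum_i c i *: a i.
have u_sqr : dotv u u <= n%:R^-1 * \sum_i c i ^+ 2 * dotv (a i) (a i).
  apply: le_trans (dotv_avg_le (fun i => c i *: a i) n_gt0) _.
  by under eq_bigr => i _ do rewrite dotvZl dotvZr mulrA -expr2.
have u_m : dotv u m = n%:R^-1 * \sum_i c i * dotv (a i) m.
  by rewrite dotvZl dotv_suml; under eq_bigr => i _ do rewrite dotvZl.
have -> : \sum_i (n%:R^-1 * dotv (a i) (a i) * c i ^+ 2 - 2 * n%:R^-1 * dotv (a i) m * c i)
    = n%:R^-1 * \sum_i c i ^+ 2 * dotv (a i) (a i)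
      - 2 * (n%:R^-1 * \sum_i c i * dotv (a i) m).
  by rewrite sumrB !mulr_sumr; congr (_ - _); apply: eq_bigr => i _; ring.
rewrite -u_m !dotvBl !dotvBr (dotvC m u); lra.
Qed.

Lemma Lipschitz_sqr_le (G : 'rV[R]_d -> 'rV[R]_d) L x y :
  Lipschitz_with G L -> dotv (G x - G y) (G x - G y) <= L ^+ 2 * enorm (x - y) ^+ 2.
Proof.
move=> /(_ x y) GL; rewrite -enorm_sqr -exprMn.
by rewrite ler_pXn2r // nnegrE ?enorm_ge0 // (le_trans (enorm_ge0 _) GL).
Qed.

Lemma quasi_strongly_monotone_sqr_ge (G : 'rV[R]_d -> 'rV[R]_d) mu xs x :
  0 <= mu -> quasi_strongly_monotone G mu xs ->
  mu ^+ 2 * enorm (x - xs) ^+ 2 <= enorm (G x) ^+ 2.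
Proof.
move=> mu_ge0 /(_ x); rewrite !enorm_sqr; move: (x - xs) (G x) => y z qsm.
have : 0 <= mu * (dotv z y - mu * dotv y y) by rewrite mulr_ge0 // subr_ge0.
have := dotvv_ge0 (z - mu *: y).
by rewrite !dotvBl !dotvBr !dotvZl !dotvZr (dotvC y); lra.
Qed.

End InnerProduct.

Section WeightedAverage.
Context {R : realType} {d : nat} {d0 : measure_display} {T : measurableType d0}.
Variable P : probability T R.

Definition second_moment (f : T -> R) : R := fine (\int[P]_w (f w ^+ 2)%:E).

Variables (n : nat) (v : T -> 'I_n -> R).
Hypothesis v_meas : forall i, measurable_fun setT (fun w => v w i).
Hypothesis v_ge0 : forall w i, 0 <= v w i.
Hypothesis v_mean : forall i, (\int[P]_w (v w i)%:E = 1)%E.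
Hypothesis v_sq : forall i, (\int[P]_w ((v w i) ^+ 2)%:E < +oo)%E.

Let Ev2 i := second_moment (fun w => v w i).

Lemma integrable_weight i : P.-integrable setT (fun w => (v w i)%:E).
Proof.
apply/integrableP; split; first exact/measurable_EFinP.
under eq_integral => w _ do rewrite abse_EFin ger0_norm //.
by rewrite v_mean ltry.
Qed.

Lemma integrable_sqr_weight i : P.-integrable setT (fun w => (v w i ^+ 2)%:E).
Proof.
apply/integrableP; split; first exact/measurable_EFinP/measurable_funX.
by under eq_integral => w _ do rewrite abse_EFin ger0_norm ?sqr_ge0 //.
Qed.

Lemma integral_sqr_weight i : (\int[P]_w (v w i ^+ 2)%:E = (Ev2 i)%:E)%E.
Proof.
rewrite /Ev2 /second_moment fineK // ge0_fin_numE //.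
by apply: integral_ge0 => w _; rewrite lee_fin sqr_ge0.
Qed.

Lemma second_moment_ge0 i : 0 <= Ev2 i.
Proof. by apply/fine_ge0/integral_ge0 => w _; rewrite lee_fin sqr_ge0. Qed.

Lemma integral_weight_quadratic (c b : 'I_n -> R) k :
  (\int[P]_w (\sum_i (c i * v w i ^+ 2 - b i * v w i) + k)%:E
    = (\sum_i (c i * Ev2 i - b i) + k)%:E)%E.
Proof.
have term_integrable i :
    P.-integrable setT (fun w => (c i * v w i ^+ 2 - b i * v w i)%:E).
  under eq_fun => w do rewrite EFinB !EFinM.
  apply: integrableB => //; apply: integrableZl => //;
    [exact: integrable_sqr_weight | exact: integrable_weight].
have term_integral i :
    (\int[P]_w (c i * v w i ^+ 2 - b i * v w i)%:E = (c i * Ev2 i - b i)%:E)%E.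
  under eq_integral => w _ do rewrite EFinB !EFinM.
  rewrite integralB //; last 2 first.
  - by apply: integrableZl => //; apply: integrable_sqr_weight.
  - by apply: integrableZl => //; apply: integrable_weight.
  rewrite (integralZl measurableT (integrable_sqr_weight i)).
  rewrite (integralZl measurableT (integrable_weight i)).
  by rewrite integral_sqr_weight v_mean mule1 EFinB EFinM.
under eq_integral => w _ do rewrite EFinD -sumEFin.
rewrite integralD //; last 2 first.
- by apply: integrable_sum => // i _; apply: term_integrable.
- exact: finite_measure_integrable_cst.
rewrite integral_cst // [X in (_ * X)%E](_ : _ = 1%E) ?mule1; last exact: probability_setT.
rewrite integral_sum // EFinD -sumEFin.
by congr (_ + _)%E; apply: eq_bigr => i _; apply: term_integral.
Qed.

Lemma measurable_dotv_wavg_sub (a : 'I_n -> 'rV[R]_d) m :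
  measurable_fun setT (fun w =>
    dotv (n%:R^-1 *: \sum_i v w i *: a i - m) (n%:R^-1 *: \sum_i v w i *: a i - m)).
Proof.
have entry_meas j : measurable_fun setT
    (fun w => (n%:R^-1 *: \sum_i v w i *: a i - m) 0 j).
  have -> : (fun w => (n%:R^-1 *: \sum_i v w i *: a i - m) 0 j)
      = (fun w => n%:R^-1 * \sum_i v w i * a i 0 j - m 0 j).
    apply/funext => w; rewrite !mxE summxE.
    by under eq_bigr => i _ do rewrite mxE.
  apply/measurable_funB/measurable_cst/measurable_funM; first exact: measurable_cst.
  apply: measurable_sum => i; apply/measurable_funM => //; exact: measurable_cst.
by apply: measurable_sum => j; apply: measurable_funM.
Qed.

Lemma expected_sqr_wavg_sub_le (a : 'I_n -> 'rV[R]_d) m :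
  (0 < n)%N -> m = n%:R^-1 *: \sum_i a i ->
  (\int[P]_w (dotv (n%:R^-1 *: \sum_i v w i *: a i - m)
                   (n%:R^-1 *: \sum_i v w i *: a i - m))%:E
    <= (n%:R^-1 * \sum_i dotv (a i) (a i) * Ev2 i - dotv m m)%:E)%E.
Proof.
move=> n_gt0 m_mean.
have n_pos : 0 < n%:R :> R by rewrite ltr0n.
apply: le_trans (ge0_le_integral _ _ (f2 := fun w => (\sum_i
    (n%:R^-1 * dotv (a i) (a i) * v w i ^+ 2 - 2 * n%:R^-1 * dotv (a i) m * v w i)
    + dotv m m)%:E) _ _ _ _) _ => //.
- by move=> w _; rewrite lee_fin dotvv_ge0.
- exact/measurable_EFinP/measurable_dotv_wavg_sub.
- apply/measurable_EFinP/measurable_funD/measurable_cst/measurable_sum => i.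
  by apply/measurable_funB; apply/measurable_funM;
    [exact: measurable_cst | exact: measurable_funX | exact: measurable_cst | ].
- by move=> w _; rewrite lee_fin; apply: dotv_wavg_sub_le.
have sum_a : \sum_i a i = n%:R *: m.
  by rewrite m_mean scalerA mulfV ?gt_eqF ?scale1r.
rewrite integral_weight_quadratic lee_fin sumrB -mulr_sumr -dotv_suml sum_a dotvZl.
under eq_bigr => i _ do rewrite -mulrA.
rewrite -mulr_sumr mulrA mulfVK ?gt_eqF //; lra.
Qed.

Lemma expected_sqr_err_le (Fs : 'I_n -> 'rV[R]_d -> 'rV[R]_d) (L : 'I_n -> R) xs x :
  (0 < n)%N -> (forall i, Lipschitz_with (Fs i) (L i)) ->
  (\int[P]_w (enorm ((wavgop Fs (v w) x - wavgop Fs (v w) xs)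
                     - (avgop Fs x - avgop Fs xs)) ^+ 2)%:E
    <= ((n%:R^-1 * \sum_i L i ^+ 2 * Ev2 i) * enorm (x - xs) ^+ 2
        - enorm (avgop Fs x - avgop Fs xs) ^+ 2)%:E)%E.
Proof.
move=> n_gt0 FsL; set a := fun i => Fs i x - Fs i xs.
have mean : avgop Fs x - avgop Fs xs = n%:R^-1 *: \sum_i a i.
  by rewrite /avgop -scalerBr -sumrB.
have err_eq w : wavgop Fs (v w) x - wavgop Fs (v w) xs
    = n%:R^-1 *: \sum_i v w i *: a i.
  by rewrite /wavgop -scalerBr -sumrB; under eq_bigr => i _ do rewrite -scalerBr.
under eq_integral => w _ do rewrite err_eq enorm_sqr.
apply: le_trans (expected_sqr_wavg_sub_le a _ n_gt0 mean) _.
rewrite lee_fin [enorm (avgop _ _ - _) ^+ 2]enorm_sqr lerD2r -mulrA.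
rewrite ler_wpM2l ?invr_ge0 ?ler0n // mulr_suml.
apply: ler_sum => i _; rewrite mulrAC ler_wpM2r ?second_moment_ge0 //.
exact: Lipschitz_sqr_le.
Qed.

End WeightedAverage.

Local Open Scope ereal_scope.

Theorem propositionD1 (R : realType) (d n : nat) (hn : (0 < n)%N)
  (Fs : 'I_n -> 'rV[R]_d -> 'rV[R]_d) (L : 'I_n -> R)
  (hL : forall i, Lipschitz_with (Fs i) (L i))
  (xs : 'rV[R]_d) (hxs : avgop Fs xs = 0%R)
  (d0 : measure_display) (T : measurableType d0) (P : probability T R)
  (v : T -> 'I_n -> R)
  (v_meas : forall i, measurable_fun setT (fun w => v w i))
  (v_ge0 : forall w i, (0 <= v w i)%R)
  (v_mean : forall i, \int[P]_w (v w i)%:E = 1)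
  (v_sq : forall i, \int[P]_w ((v w i) ^+ 2)%:E < +oo) :
  let Ev2 := fun i => fine (\int[P]_w ((v w i) ^+ 2)%:E) in
  let F := avgop Fs in
  let Fv := fun w => wavgop Fs (v w) in
  let err := fun x w => enorm ((Fv w x - Fv w xs) - (F x - F xs)) in
  (let delta := (2 / n%:R * \sum_(i < n) L i ^+ 2 * Ev2 i)%R in
   forall x, \int[P]_w ((err x w) ^+ 2)%:E <= (delta / 2 * enorm (x - xs) ^+ 2)%:E)
  /\
  (forall mu : R, (0 < mu)%R -> quasi_strongly_monotone F mu xs ->
   let delta := (2 / n%:R * \sum_(i < n) L i ^+ 2 * Ev2 i - 2 * mu ^+ 2)%R in
   forall x, \int[P]_w ((err x w) ^+ 2)%:E <= (delta / 2 * enorm (x - xs) ^+ 2)%:E).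
Proof.
move=> Ev2 F Fv err.
have err_le x : \int[P]_w (err x w ^+ 2)%:E <=
    ((n%:R^-1 * \sum_i L i ^+ 2 * Ev2 i) * enorm (x - xs) ^+ 2
     - enorm (F x - F xs) ^+ 2)%:E.
  exact: (expected_sqr_err_le _ _ _ v_meas v_ge0 v_mean v_sq _ _ _ _ hn hL).
have n_neq0 : (n%:R != 0 :> R)%R by rewrite pnatr_eq0 -lt0n.
set S := (\sum_i L i ^+ 2 * Ev2 i)%R in err_le *.
split => [delta x | mu mu_gt0 F_qsm delta x];
  apply: le_trans (err_le x) _; rewrite lee_fin /delta.
- have -> : (2 / n%:R * S / 2 = n%:R^-1 * S)%R by field.
  by have := sqr_ge0 (enorm (F x - F xs)); lra.
- have -> : ((2 / n%:R * S - 2 * mu ^+ 2) / 2 = n%:R^-1 * S - mu ^+ 2)%R by field.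
  have F_xs : F xs = 0%R := hxs.
  have := quasi_strongly_monotone_sqr_ge _ _ _ x (ltW mu_gt0) F_qsm.
  by rewrite F_xs subr0; lra.
Qed.
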